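(* Let $c\in\mathbb{R}$, $g\in\mathbb{R}^d$, let $\mathbf{H}\in\mathbb{R}^{d\times d}$ be symmetric, let $w^t\in\mathbb{R}^d$, and define $$q(w)=c+\langle g,w-w^t\rangle+\tfrac12\langle\mathbf{H}(w-w^t),w-w^t\rangle .$$ Assume $q$ has at least one root and let $w_q^*$ be a root of $q$ of least Euclidean norm, i.e. $w_q^*\in\arg\min\{\|w\|^2: q(w)=0\}$. Define the Newton–Raphson iterates $w^0=w^t$ and $$w^{i+1}=w^i-\frac{q(w^i)}{\|\nabla q(w^i)\|^2}\nabla q(w^i),\qquad i\ge0,$$ assuming $\nabla q(w^i)\neq0$ for all $i$. If $g\in\operatorname{Range}(\mathbf{H})$ and $w^0\in\operatorname{Range}(\mathbf{H})$, then $w^i\in\operatorname{Range}(\mathbf{H})$ and $\nabla q(w^i)\in\operatorname{Range}(\mathbf{H})$ for all $i$, and $w_q^*\in\operatorname{Range}(\mathbf{H})$.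
   Context: In the paper $c=f_i(w^t)$, $g=\nabla f_i(w^t)$, $\mathbf{H}=\nabla^2 f_i(w^t)$ for a twice differentiable loss $f_i$; the statement holds for arbitrary such data. *)

From HB Require Import structures.
From mathcomp Require Import all_boot all_order all_algebra.
From mathcomp Require Import reals.
Set Implicit Arguments. Unset Strict Implicit. Unset Printing Implicit Defensive.
Import Order.TTheory GRing.Theory Num.Theory.
Local Open Scope ring_scope.

Definition dotv (R : realType) (d : nat) (u v : 'cV[R]_d) : R :=
  \sum_(i < d) u i 0 * v i 0.

Definition sqnorm (R : realType) (d : nat) (u : 'cV[R]_d) : R := dotv u u.

Definition in_range (R : realType) (d : nat) (H : 'M[R]_d) (v : 'cV[R]_d) : Prop :=
  exists x : 'cV[R]_d, v = H *m x.

Definition qfun (R : realType) (d : nat) (c : R) (g : 'cV[R]_d) (H : 'M[R]_d)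
  (wt w : 'cV[R]_d) : R :=
  c + dotv g (w - wt) + 2^-1 * dotv (H *m (w - wt)) (w - wt).

(* Gradient of q for symmetric H: grad q(w) = g + H (w - wt). *)
Definition gradq (R : realType) (d : nat) (g : 'cV[R]_d) (H : 'M[R]_d)
  (wt w : 'cV[R]_d) : 'cV[R]_d :=
  g + H *m (w - wt).

Fixpoint nr_iter (R : realType) (d : nat) (c : R) (g : 'cV[R]_d) (H : 'M[R]_d)
  (wt : 'cV[R]_d) (i : nat) : 'cV[R]_d :=
  match i with
  | 0 => wt
  | i'.+1 =>
      let w := nr_iter c g H wt i' in
      w - (qfun c g H wt w / sqnorm (gradq g H wt w)) *: gradq g H wt w
  end.

From HB Require Import structures.
From mathcomp Require Import all_boot all_order all_algebra.
From mathcomp Require Import reals.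
Set Implicit Arguments. Unset Strict Implicit. Unset Printing Implicit Defensive.
Import Order.TTheory GRing.Theory Num.Theory.
Local Open Scope ring_scope.

Lemma mulmx_tr_eq0 (R : realDomainType) m n (M : 'M[R]_(m, n)) :
  M *m M^T = 0 -> M = 0.
Proof.
move=> MMt0; apply/matrixP => i j; rewrite mxE.
have := congr1 (fun A : 'M_m => A i i) MMt0; rewrite !mxE => sum_sq0.
have sq_ge0 k : true -> 0 <= M i k * M^T k i by rewrite mxE -expr2 sqr_ge0.
have /eqP := psumr_eq0P sq_ge0 sum_sq0 (i := j) isT.
by rewrite mxE mulf_eq0 orbb => /eqP.
Qed.

Section SymmetricRangeKernel.
Variables (R : realFieldType) (n : nat) (H : 'M[R]_n).
Hypothesis symH : H^T = H.

Lemma sym_capmx_kermx : (H :&: kermx H)%MS = 0.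
Proof.
set C := (H :&: kermx H)%MS.
have /submxP[X defC] : (C <= H)%MS := capmxSl _ _.
have /sub_kermxP CH : (C <= kermx H)%MS := capmxSr _ _.
by apply: mulmx_tr_eq0; rewrite {2}defC trmx_mul symH mulmxA CH mul0mx.
Qed.

Lemma sym_addsmx_kermx_full : row_full (H + kermx H)%MS.
Proof.
apply/eqP; have := mxrank_sum_cap H (kermx H).
rewrite sym_capmx_kermx mxrank0 addn0 mxrank_ker => ->.
by rewrite subnKC // rank_leq_row.
Qed.

Lemma sym_range_kernel_decomp (w : 'cV[R]_n) :
  exists u k : 'cV[R]_n, w = H *m u + k /\ H *m k = 0.
Proof.
have /sub_addsmxP[[a b] /= defw] := submx_full w^T sym_addsmx_kermx_full.
exists a^T, (b *m kermx H)^T; split.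
  by rewrite -[w]trmxK defw linearD /= trmx_mul symH.
have /sub_kermxP Hk : (b *m kermx H <= kermx H)%MS := submxMl _ _.
by rewrite -[H in H *m _]symH -trmx_mul Hk trmx0.
Qed.

End SymmetricRangeKernel.

Section Dot.
Variables (R : realType) (d : nat).
Implicit Types (u v w : 'cV[R]_d) (H : 'M[R]_d).

Lemma dotvE u v : dotv u v = (u^T *m v) 0 0.
Proof. by rewrite mxE; apply: eq_bigr => i _; rewrite mxE. Qed.

Lemma dotvC u v : dotv u v = dotv v u.
Proof. by apply: eq_bigr => i _; rewrite mulrC. Qed.

Lemma dotvDl u v w : dotv (u + v) w = dotv u w + dotv v w.
Proof. by rewrite !dotvE linearD /= mulmxDl mxE. Qed.

Lemma dotvDr u v w : dotv u (v + w) = dotv u v + dotv u w.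
Proof. by rewrite !dotvE mulmxDr mxE. Qed.

Lemma dotv0l u : dotv 0 u = 0.
Proof. by rewrite dotvE trmx0 mul0mx mxE. Qed.

Lemma dotv_mulmx_sym H u v : H^T = H -> dotv u (H *m v) = dotv (H *m u) v.
Proof. by move=> symH; rewrite !dotvE trmx_mul symH mulmxA. Qed.

Lemma dotv_range_kernel H u v :
  H^T = H -> in_range H u -> H *m v = 0 -> dotv u v = 0.
Proof. by move=> symH [x ->] Hv; rewrite dotvC dotv_mulmx_sym // Hv dotv0l. Qed.

Lemma sqnorm_ge0 u : 0 <= sqnorm u.
Proof. by apply: sumr_ge0 => i _; rewrite -expr2 sqr_ge0. Qed.

Lemma sqnorm_eq0 u : sqnorm u = 0 -> u = 0.
Proof.
move=> u0; apply/eqP; rewrite -trmx_eq0; apply/eqP/mulmx_tr_eq0/matrixP => i j.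
by rewrite !ord1 trmxK -dotvE -/(sqnorm u) u0 mxE.
Qed.

Lemma sqnormD_orth u v : dotv u v = 0 -> sqnorm (u + v) = sqnorm u + sqnorm v.
Proof.
by move=> uv0; rewrite /sqnorm !dotvDl !dotvDr [dotv v u]dotvC uv0 addr0 add0r.
Qed.

End Dot.

Section Range.
Variables (R : realType) (d : nat) (H : 'M[R]_d).

Lemma in_range_mulmx x : in_range H (H *m x).
Proof. by exists x. Qed.

Lemma in_rangeD u v : in_range H u -> in_range H v -> in_range H (u + v).
Proof. by move=> [x ->] [y ->]; exists (x + y); rewrite mulmxDr. Qed.

Lemma in_rangeN u : in_range H u -> in_range H (- u).
Proof. by move=> [x ->]; exists (- x); rewrite mulmxN. Qed.

Lemma in_rangeZ a u : in_range H u -> in_range H (a *: u).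
Proof. by move=> [x ->]; exists (a *: x); rewrite scalemxAr. Qed.

End Range.

Section Quadratic.
Variables (R : realType) (d : nat) (c : R) (g : 'cV[R]_d) (H : 'M[R]_d).
Variable wt : 'cV[R]_d.
Hypotheses (symH : H^T = H) (g_range : in_range H g) (wt_range : in_range H wt).

Lemma gradq_in_range w : in_range H (gradq g H wt w).
Proof. exact/in_rangeD/in_range_mulmx. Qed.

Lemma nr_iter_in_range i : in_range H (nr_iter c g H wt i).
Proof.
elim: i => [|i IHi] //=.
exact/in_rangeD/in_rangeN/in_rangeZ/gradq_in_range.
Qed.

Lemma qfunD_kernel w k : H *m k = 0 -> qfun c g H wt (w + k) = qfun c g H wt w.
Proof.
move=> Hk; have gk0 := dotv_range_kernel symH g_range Hk.
have Hwk0 := dotv_range_kernel symH (in_range_mulmx H (w - wt)) Hk.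
rewrite /qfun [w + k - wt]addrAC mulmxDr Hk addr0 !(dotvDr _ (w - wt) k).
by rewrite gk0 Hwk0 !addr0.
Qed.

Lemma min_sqnorm_root_in_range wq :
  qfun c g H wt wq = 0 ->
  (forall w, qfun c g H wt w = 0 -> sqnorm wq <= sqnorm w) ->
  in_range H wq.
Proof.
move=> wq_root wq_min.
have [u [k [defwq Hk]]] := sym_range_kernel_decomp symH wq.
have pk0 := dotv_range_kernel symH (in_range_mulmx H u) Hk.
have root_p : qfun c g H wt (H *m u) = 0 by rewrite -(qfunD_kernel _ Hk) -defwq.
have := wq_min _ root_p; rewrite defwq sqnormD_orth // gerDl => k_le0.
have -> : k = 0 by apply/sqnorm_eq0/eqP; rewrite eq_le k_le0 sqnorm_ge0.
by rewrite addr0; apply: in_range_mulmx.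
Qed.

End Quadratic.

Theorem lemma6 (R : realType) (d : nat) (c : R) (g : 'cV[R]_d) (H : 'M[R]_d)
  (wt wq : 'cV[R]_d) :
  H^T = H ->
  qfun c g H wt wq = 0 ->
  (forall w : 'cV[R]_d, qfun c g H wt w = 0 -> sqnorm wq <= sqnorm w) ->
  (forall i : nat, gradq g H wt (nr_iter c g H wt i) != 0) ->
  in_range H g ->
  in_range H wt ->
  (forall i : nat, in_range H (nr_iter c g H wt i) /\
                   in_range H (gradq g H wt (nr_iter c g H wt i))) /\
  in_range H wq.
Proof.
move=> symH wq_root wq_min _ g_range wt_range.
split.
  by move=> i; split; [apply: nr_iter_in_range | apply: gradq_in_range].
exact: min_sqnorm_root_in_range wq_min.
Qed.
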